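(* For every integer $R\ge1$, $$\pi-\Vert T_R\Vert=\inf_{\phi\in E(R)}\int_0^{2\pi}x\,|\phi(x)|^2\,dx,$$ where $E(R)$ is the set of functions $\phi(x)=\frac{1}{\sqrt{2\pi}}\sum_{n=1}^R u_ne^{i(n-1)x}$ with $\mathbf{u}\in\mathbb{C}^R$, $\sum_{n=1}^R|u_n|^2=1$.
   Context: $T_R$ is the $R\times R$ matrix with $(T_R)_{m,n}=0$ if $m=n$ and $(T_R)_{m,n}=\frac{1}{m-n}$ if $m\ne n$, $1\le m,n\le R$. $\Vert\cdot\Vert$ is the operator norm induced by the Euclidean norm. *)

From Stdlib Require Import Reals Lra.
Open Scope R_scope.

(* rsum f N = f 0 + ... + f (N-1)  (N terms). Index k (0-based) stands for
   the paper's index n = k+1. *)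
Fixpoint rsum (f : nat -> R) (N : nat) : R :=
  match N with
  | O => 0
  | S k => rsum f k + f k
  end.

(* Entries of T_R: 0 on the diagonal, 1/(m-n) off it (0-based indices give the
   same differences m-n as the 1-based ones). *)
Definition Tentry (m n : nat) : R :=
  if Nat.eq_dec m n then 0 else / (INR m - INR n).

Definition Tapply (N : nat) (v : nat -> R) (m : nat) : R :=
  rsum (fun n => Tentry m n * v n) N.

Definition enorm (N : nat) (v : nat -> R) : R := sqrt (rsum (fun k => v k ^ 2) N).

(* { ||T_N v|| : v in R^N, ||v|| = 1 } ; the operator norm is its supremum *)
Definition opnorm_set (N : nat) (r : R) : Prop :=
  exists v : nat -> R, enorm N v = 1 /\ r = enorm N (Tapply N v).

(* phi(x) = (2 pi)^(-1/2) sum_{k<N} u_k e^{i k x}, with u_k = a_k + i b_k;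
   real and imaginary parts. *)
Definition phi_re (N : nat) (a b : nat -> R) (x : R) : R :=
  / sqrt (2 * PI) * rsum (fun k => a k * cos (INR k * x) - b k * sin (INR k * x)) N.
Definition phi_im (N : nat) (a b : nat -> R) (x : R) : R :=
  / sqrt (2 * PI) * rsum (fun k => a k * sin (INR k * x) + b k * cos (INR k * x)) N.

Definition phi_abs2 (N : nat) (a b : nat -> R) (x : R) : R :=
  phi_re N a b x ^ 2 + phi_im N a b x ^ 2.

Definition energy_set (N : nat) (r : R) : Prop :=
  exists a b : nat -> R,
    rsum (fun k => a k ^ 2 + b k ^ 2) N = 1 /\
    exists pr : Riemann_integrable (fun x => x * phi_abs2 N a b x) 0 (2 * PI),
      r = RiemannInt pr.

Definition is_glb (E : R -> Prop) (m : R) : Prop :=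
  (forall x, E x -> m <= x) /\ (forall b, (forall x, E x -> b <= x) -> b <= m).

(* Write u_k = a_k + i b_k.  Expanding |phi|^2 as a double sum of trigonometric
   monomials and integrating each term against x on [0, 2 pi] gives the
   quadratic form

     int_0^{2 pi} x |phi(x)|^2 dx = pi (|a|^2 + |b|^2) - <a, T b> + <b, T a>
                                   = pi (|a|^2 + |b|^2) - 2 <a, T b>,

   the second line because T is antisymmetric.  Hence, writing ||T|| for the
   supremum of ||T v|| over unit vectors v,
   - for |a|^2 + |b|^2 = 1, AM-GM gives 2 <a, T b> <= ||T||, so every energy
     is >= pi - ||T||;
   - for a unit vector v, the choice a = v / sqrt 2, b = -T v / (sqrt 2 ||T v||)
     has energy exactly pi - ||T v||, so pi - ||T|| is the greatest lower bound;
   - energies are integrals of nonnegative functions, so ||T v|| <= pi; this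
     bounds the set of values ||T v||, whose supremum therefore exists. *)

From Coquelicot Require Import Coquelicot.
From Stdlib Require Import Reals Lra Lia.
Open Scope R_scope.

(** * Finite sums *)

Lemma rsum_ext f g N : (forall k, (k < N)%nat -> f k = g k) -> rsum f N = rsum g N.
Proof.
  induction N as [|N IH]; intros H; simpl; [reflexivity|].
  rewrite IH by (intros; apply H; lia). rewrite H by lia. reflexivity.
Qed.

Lemma rsum_plus f g N : rsum (fun k => f k + g k) N = rsum f N + rsum g N.
Proof. induction N as [|N IH]; simpl; [ring|]. rewrite IH; ring. Qed.

Lemma rsum_opp f N : rsum (fun k => - f k) N = - rsum f N.
Proof. induction N as [|N IH]; simpl; [ring|]. rewrite IH; ring. Qed.

Lemma rsum_minus f g N : rsum (fun k => f k - g k) N = rsum f N - rsum g N.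
Proof. induction N as [|N IH]; simpl; [ring|]. rewrite IH; ring. Qed.

Lemma rsum_scal c f N : rsum (fun k => c * f k) N = c * rsum f N.
Proof. induction N as [|N IH]; simpl; [ring|]. rewrite IH; ring. Qed.

Lemma rsum_zero f N : (forall k, (k < N)%nat -> f k = 0) -> rsum f N = 0.
Proof.
  induction N as [|N IH]; intros H; simpl; [reflexivity|].
  rewrite IH by (intros; apply H; lia). rewrite H by lia. ring.
Qed.

Lemma rsum_le f g N : (forall k, (k < N)%nat -> f k <= g k) -> rsum f N <= rsum g N.
Proof.
  induction N as [|N IH]; intros H; simpl; [lra|].
  pose proof (H N ltac:(lia)). pose proof (IH ltac:(intros; apply H; lia)). lra.
Qed.

Lemma rsum_nonneg_eq0 f N : (forall k, (k < N)%nat -> 0 <= f k) -> rsum f N = 0 ->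
  forall k, (k < N)%nat -> f k = 0.
Proof.
  intros Hpos Hsum.
  assert (Hle : forall M, (M <= N)%nat -> 0 <= rsum f M).
  { induction M as [|M IH]; intros HM; simpl; [lra|].
    pose proof (IH ltac:(lia)). pose proof (Hpos M ltac:(lia)). lra. }
  induction N as [|N IH]; intros k Hk; [lia|].
  simpl in Hsum. pose proof (Hle N ltac:(lia)). pose proof (Hpos N ltac:(lia)).
  destruct (Nat.eq_dec k N) as [->|Hne]; [lra|].
  apply IH; [intros; apply Hpos; lia| |intros; apply Hle; lia|lia]. lra.
Qed.

Lemma rsum_prod f g N : rsum f N * rsum g N = rsum (fun m => rsum (fun n => f m * g n) N) N.
Proof.
  rewrite Rmult_comm, <- rsum_scal. apply rsum_ext; intros m _.
  rewrite Rmult_comm, <- rsum_scal. reflexivity.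
Qed.

Lemma rsum_swap F N M :
  rsum (fun m => rsum (fun n => F m n) N) M = rsum (fun n => rsum (fun m => F m n) M) N.
Proof.
  induction M as [|M IH]; simpl.
  - symmetry; apply rsum_zero; auto.
  - rewrite IH, <- rsum_plus. reflexivity.
Qed.

Lemma rsum_delta f N m : (m < N)%nat ->
  rsum (fun n => if Nat.eq_dec m n then f n else 0) N = f m.
Proof.
  induction N as [|N IH]; intros Hm; [lia|]. simpl.
  destruct (Nat.eq_dec m N) as [->|Hne].
  - rewrite rsum_zero; [ring|]. intros k Hk. destruct (Nat.eq_dec N k); [lia|reflexivity].
  - rewrite IH by lia. ring.
Qed.

(** * Vectors of R^N and the matrix T_N *)

Section Vectors.
Variable N : nat.

Definition dot (x y : nat -> R) : R := rsum (fun k => x k * y k) N.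
Definition nsq (v : nat -> R) : R := rsum (fun k => v k ^ 2) N.

Lemma nsq_nonneg v : 0 <= nsq v.
Proof.
  rewrite <- (rsum_zero (fun _ => 0) N) by auto.
  apply rsum_le; intros; apply pow2_ge_0.
Qed.

Lemma nsq_eq0 v : nsq v = 0 -> forall k, (k < N)%nat -> v k = 0.
Proof.
  intros H k Hk.
  pose proof (rsum_nonneg_eq0 _ N (fun k _ => pow2_ge_0 (v k)) H k Hk). nra.
Qed.

Lemma enorm_eq1 v : enorm N v = 1 <-> nsq v = 1.
Proof.
  unfold enorm. fold (nsq v). pose proof (nsq_nonneg v) as Hpos. split; intros H.
  - rewrite <- (sqrt_sqrt (nsq v)), H by lra. ring.
  - rewrite H. apply sqrt_1.
Qed.

Lemma nsq_scal c v : nsq (fun k => c * v k) = c ^ 2 * nsq v.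
Proof. unfold nsq. rewrite <- rsum_scal. apply rsum_ext; intros; ring. Qed.

Lemma Tapply_scal c v m : Tapply N (fun k => c * v k) m = c * Tapply N v m.
Proof. unfold Tapply. rewrite <- rsum_scal. apply rsum_ext; intros; ring. Qed.

Lemma Tapply_vanish v : (forall k, (k < N)%nat -> v k = 0) -> forall m, Tapply N v m = 0.
Proof. intros Hv m. apply rsum_zero. intros k Hk. rewrite Hv by exact Hk. ring. Qed.

Lemma nsq_Tscal c v : nsq (Tapply N (fun k => c * v k)) = c ^ 2 * nsq (Tapply N v).
Proof. unfold nsq. rewrite <- rsum_scal. apply rsum_ext; intros. rewrite Tapply_scal; ring. Qed.

Lemma dot_self v : dot v v = nsq v.
Proof. apply rsum_ext; intros; ring. Qed.

Lemma Tentry_anti m n : Tentry n m = - Tentry m n.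
Proof.
  unfold Tentry. destruct (Nat.eq_dec n m), (Nat.eq_dec m n); try lia; [ring|].
  assert (INR m <> INR n) by (intros E; apply INR_eq in E; lia).
  field. split; lra.
Qed.

Lemma dot_T_anti x y : dot x (Tapply N y) = - dot y (Tapply N x).
Proof.
  unfold dot, Tapply.
  rewrite !(rsum_ext (fun m => _ * rsum _ N) _ N (fun m _ => eq_sym (rsum_scal _ _ _))).
  rewrite rsum_swap, <- rsum_opp. apply rsum_ext; intros n _.
  rewrite <- rsum_opp. apply rsum_ext; intros m _. rewrite (Tentry_anti m n). ring.
Qed.

(* The energy of phi with coefficients u_k = a_k + i b_k (computed below). *)
Definition energy_form (a b : nat -> R) : R := PI * (nsq a + nsq b) - 2 * dot a (Tapply N b).

Lemma energy_form_scal s c x y :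
  energy_form (fun k => s * x k) (fun k => c * y k)
  = PI * (s ^ 2 * nsq x + c ^ 2 * nsq y) - 2 * (s * c) * dot x (Tapply N y).
Proof.
  assert (Hdot : dot (fun k => s * x k) (Tapply N (fun k => c * y k)) = s * c * dot x (Tapply N y)).
  { unfold dot. rewrite <- rsum_scal. apply rsum_ext; intros. rewrite Tapply_scal; ring. }
  unfold energy_form. rewrite !nsq_scal, Hdot. ring.
Qed.

End Vectors.

(** * The energy integral *)

Lemma sin_2kPI k : sin (2 * INR k * PI) = 0.
Proof. pose proof (sin_period 0 k) as H. rewrite Rplus_0_l, sin_0 in H. exact H. Qed.

Lemma cos_2kPI k : cos (2 * INR k * PI) = 1.
Proof. pose proof (cos_period 0 k) as H. rewrite Rplus_0_l, cos_0 in H. exact H. Qed.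

(* Fundamental theorem of calculus with an arbitrary name for the value. *)
Lemma is_RInt_primitive (F f : R -> R) a b v :
  (forall x, Rmin a b <= x <= Rmax a b -> is_derive F x (f x)) ->
  (forall x, Rmin a b <= x <= Rmax a b -> continuous f x) ->
  v = F b - F a -> is_RInt f a b v.
Proof. intros H1 H2 ->. exact (is_RInt_derive F f a b H1 H2). Qed.

Lemma is_RInt_x_trig (m n : nat) (A B : R) :
  is_RInt (fun x => x * (A * cos ((INR m - INR n) * x) + B * sin ((INR m - INR n) * x)))
    0 (2 * PI)
    ((if Nat.eq_dec m n then 2 * PI ^ 2 * A else 0) - 2 * PI * B * Tentry m n).
Proof.
  unfold Tentry. destruct (Nat.eq_dec m n) as [<-|Hmn].
  - apply (is_RInt_ext (V := R_NormedModule) (fun x => A * x)).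
    { intros x _. rewrite Rminus_diag, Rmult_0_l, cos_0, sin_0. simpl. ring. }
    apply (is_RInt_primitive (fun x => A * x ^ 2 / 2)); [| |field].
    + intros x _. auto_derive; auto. field.
    + intros x _. apply (ex_derive_continuous (K := R_AbsRing) (V := R_NormedModule)).
      auto_derive; auto.
  - set (c := INR m - INR n).
    assert (Hc : c <> 0) by (intros E; apply Hmn, INR_eq; unfold c in E; lra).
    assert (Hcc : c * (2 * PI) = 2 * INR m * PI - 2 * INR n * PI) by (unfold c; ring).
    assert (Hs : sin (c * (2 * PI)) = 0) by (rewrite Hcc, sin_minus, !sin_2kPI; ring).
    assert (Hco : cos (c * (2 * PI)) = 1)
      by (rewrite Hcc, cos_minus, !sin_2kPI, !cos_2kPI; ring).
    apply (is_RInt_primitive (fun x => A * (x * sin (c * x) / c + cos (c * x) / c ^ 2)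
                                       + B * (- x * cos (c * x) / c + sin (c * x) / c ^ 2))).
    + intros x _. auto_derive; auto. field; auto.
    + intros x _. apply (ex_derive_continuous (K := R_AbsRing) (V := R_NormedModule)).
      auto_derive; auto.
    + rewrite Hs, Hco, !Rmult_0_r, sin_0, cos_0. field; auto.
Qed.

Lemma is_RInt_rsum (f : nat -> R -> R) (I : nat -> R) N a b :
  (forall k, (k < N)%nat -> is_RInt (f k) a b (I k)) ->
  is_RInt (fun x => rsum (fun k => f k x) N) a b (rsum I N).
Proof.
  induction N as [|N IH]; intros H; simpl.
  - pose proof (is_RInt_const (V := R_NormedModule) a b 0) as H0.
    rewrite (scal_zero_r (V := R_NormedModule)) in H0. exact H0.
  - apply (is_RInt_plus (V := R_NormedModule)); [apply IH; intros|]; apply H; lia.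
Qed.

Lemma phi_abs2_expand N a b x : phi_abs2 N a b x =
  / (2 * PI) * rsum (fun m => rsum (fun n =>
      (a m * a n + b m * b n) * cos ((INR m - INR n) * x)
      + (a m * b n - b m * a n) * sin ((INR m - INR n) * x)) N) N.
Proof.
  pose proof PI_RGT_0.
  assert (Hinv : (/ sqrt (2 * PI)) ^ 2 = / (2 * PI)).
  { rewrite <- (sqrt_sqrt (2 * PI)) at 2 by lra.
    assert (0 < sqrt (2 * PI)) by (apply sqrt_lt_R0; lra). field. lra. }
  unfold phi_abs2, phi_re, phi_im. rewrite !Rpow_mult_distr, Hinv, <- Rmult_plus_distr_l.
  f_equal. rewrite <- !Rsqr_pow2. unfold Rsqr. rewrite !rsum_prod, <- rsum_plus.
  apply rsum_ext; intros m _. rewrite <- rsum_plus. apply rsum_ext; intros n _.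
  replace ((INR m - INR n) * x) with (INR m * x - INR n * x) by ring.
  rewrite cos_minus, sin_minus. ring.
Qed.

Lemma energy_is_RInt N a b :
  is_RInt (fun x => x * phi_abs2 N a b x) 0 (2 * PI) (energy_form N a b).
Proof.
  pose proof PI_RGT_0.
  apply (is_RInt_ext (V := R_NormedModule) (fun x => / (2 * PI) * rsum (fun m => rsum (fun n =>
      x * ((a m * a n + b m * b n) * cos ((INR m - INR n) * x)
           + (a m * b n - b m * a n) * sin ((INR m - INR n) * x))) N) N)).
  { intros x _. rewrite phi_abs2_expand, <- Rmult_assoc, (Rmult_comm x), Rmult_assoc.
    f_equal. rewrite <- rsum_scal. apply rsum_ext; intros m _. apply rsum_scal. }
  replace (energy_form N a b) with (scal (/ (2 * PI)) (rsum (fun m =>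
      rsum (fun n => (if Nat.eq_dec m n then 2 * PI ^ 2 * (a m * a n + b m * b n) else 0)
                     - 2 * PI * (a m * b n - b m * a n) * Tentry m n) N) N)).
  { apply (is_RInt_scal (V := R_NormedModule)).
    apply is_RInt_rsum; intros m _. apply is_RInt_rsum; intros n _. apply is_RInt_x_trig. }
  assert (Hrow : forall m, (m < N)%nat ->
    rsum (fun n => (if Nat.eq_dec m n then 2 * PI ^ 2 * (a m * a n + b m * b n) else 0)
                   - 2 * PI * (a m * b n - b m * a n) * Tentry m n) N
    = 2 * PI * (PI * (a m ^ 2 + b m ^ 2) - a m * Tapply N b m + b m * Tapply N a m)).
  { intros m Hm. rewrite rsum_minus, (rsum_delta (fun n => 2 * PI ^ 2 * (a m * a n + b m * b n)))
      by exact Hm.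
    assert (HT : rsum (fun n => 2 * PI * (a m * b n - b m * a n) * Tentry m n) N
                 = 2 * PI * a m * Tapply N b m - 2 * PI * b m * Tapply N a m).
    { unfold Tapply. rewrite <- !rsum_scal, <- rsum_minus. apply rsum_ext; intros; ring. }
    rewrite HT. ring. }
  rewrite (rsum_ext _ _ N Hrow), rsum_scal, rsum_plus, rsum_minus, rsum_scal, rsum_plus.
  fold (nsq N a) (nsq N b) (dot N a (Tapply N b)) (dot N b (Tapply N a)).
  unfold energy_form. rewrite (dot_T_anti N b a).
  unfold scal; simpl; unfold mult; simpl. field. lra.
Qed.

Lemma energy_RiemannInt N a b
  (pr : Riemann_integrable (fun x => x * phi_abs2 N a b x) 0 (2 * PI)) :
  RiemannInt pr = energy_form N a b.
Proof. rewrite <- RInt_Reals. apply is_RInt_unique, energy_is_RInt. Qed.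

Lemma energy_set_iff N r : energy_set N r <->
  exists a b, nsq N a + nsq N b = 1 /\ r = energy_form N a b.
Proof.
  unfold energy_set. split.
  - intros (a & b & Hab & pr & ->). exists a, b.
    split; [rewrite rsum_plus in Hab; exact Hab | apply energy_RiemannInt].
  - intros (a & b & Hab & ->). exists a, b. split; [rewrite rsum_plus; exact Hab|].
    exists (ex_RInt_Reals_0 _ _ _ (ex_intro _ _ (energy_is_RInt N a b))).
    symmetry; apply energy_RiemannInt.
Qed.

(* The energy is the integral of a nonnegative function. *)
Lemma energy_form_nonneg N a b : 0 <= energy_form N a b.
Proof.
  pose proof PI_RGT_0.
  rewrite <- (is_RInt_unique _ _ _ _ (energy_is_RInt N a b)).
  apply RInt_ge_0; [lra | eexists; apply energy_is_RInt |].
  intros x Hx. unfold phi_abs2. apply Rmult_le_pos; [lra|].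
  apply Rplus_le_le_0_compat; apply pow2_ge_0.
Qed.

(** * Upper and lower bounds *)

(* For a unit vector v, the value pi - ||T v|| is an energy: take
   a = v / sqrt 2 and b = - T v / (sqrt 2 ||T v||)  (or b = 0 if T v = 0). *)
Lemma energy_attains N v : nsq N v = 1 -> energy_set N (PI - enorm N (Tapply N v)).
Proof.
  intros Hv. apply energy_set_iff. set (w := Tapply N v).
  change (enorm N w) with (sqrt (nsq N w)).
  assert (Hvw : dot N v (Tapply N w) = - nsq N w) by (rewrite dot_T_anti, dot_self; reflexivity).
  pose proof (nsq_nonneg N w) as Hw.
  destruct (Req_dec (nsq N w) 0) as [H0|H0].
  - exists (fun k => 1 * v k), (fun k => 0 * w k).
    rewrite energy_form_scal, !nsq_scal, Hv, Hvw, H0, sqrt_0. split; ring.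
  - set (t := sqrt (nsq N w)).
    assert (Ht : 0 < t) by (apply sqrt_lt_R0; lra).
    assert (Htt : t * t = nsq N w) by (apply sqrt_sqrt; lra).
    assert (Hr : 0 < sqrt 2) by (apply sqrt_lt_R0; lra).
    assert (Hrr : sqrt 2 * sqrt 2 = 2) by (apply sqrt_sqrt; lra).
    exists (fun k => / sqrt 2 * v k), (fun k => - / (sqrt 2 * t) * w k).
    rewrite energy_form_scal, !nsq_scal, Hv, Hvw, <- Htt. set (h := / (sqrt 2 * sqrt 2)).
    assert (Hh : h = / 2) by (unfold h; rewrite Hrr; reflexivity).
    assert (Hunit : (/ sqrt 2) ^ 2 * 1 + (- / (sqrt 2 * t)) ^ 2 * (t * t) = h + h)
      by (unfold h; field; lra).
    split.
    + rewrite Hunit, Hh. field.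
    + rewrite Hunit. replace (2 * (/ sqrt 2 * - / (sqrt 2 * t)) * - (t * t)) with (2 * h * t)
        by (unfold h; field; lra).
      rewrite Hh. field.
Qed.

(* Every ||T v|| with |v| = 1 is at most pi, because pi - ||T v|| is an energy. *)
Lemma opnorm_set_le_PI N r : opnorm_set N r -> r <= PI.
Proof.
  intros (v & Hv & ->). apply enorm_eq1 in Hv.
  destruct (proj1 (energy_set_iff _ _) (energy_attains N v Hv)) as (a & b & _ & He).
  pose proof (energy_form_nonneg N a b). lra.
Qed.

(* For N >= 1 the first basis vector gives a value ||T e_0|| >= 0. *)
Lemma opnorm_set_inhabited N : (1 <= N)%nat -> exists r, opnorm_set N r /\ 0 <= r.
Proof.
  intros HN. set (e0 := fun k : nat => if Nat.eq_dec 0 k then 1 else 0).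
  exists (enorm N (Tapply N e0)). split; [|apply sqrt_pos].
  exists e0. split; [|reflexivity]. apply enorm_eq1. unfold nsq.
  rewrite <- (rsum_delta (fun _ => 1) N 0) by lia.
  apply rsum_ext; intros k _. unfold e0. destruct (Nat.eq_dec 0 k); ring.
Qed.

Lemma opnorm_sq_bound N nrm : is_lub (opnorm_set N) nrm ->
  forall y, nsq N (Tapply N y) <= nrm ^ 2 * nsq N y.
Proof.
  intros Hlub y. pose proof (nsq_nonneg N y) as Hy.
  pose proof (nsq_nonneg N (Tapply N y)) as HTy.
  destruct (Req_dec (nsq N y) 0) as [H0|H0].
  - rewrite H0. unfold nsq at 1. rewrite rsum_zero; [lra|]. intros m _.
    rewrite (Tapply_vanish N y (nsq_eq0 N y H0)). ring.
  - assert (Hs0 : 0 < nsq N y) by lra.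
    set (s := nsq N y) in *. set (q := / sqrt s).
    assert (Hs : 0 < sqrt s) by (apply sqrt_lt_R0; lra).
    assert (Hq2 : q ^ 2 = / s) by (unfold q; rewrite <- (sqrt_sqrt s) at 2 by lra; field; lra).
    assert (Hunit : nsq N (fun k => q * y k) = 1) by (rewrite nsq_scal, Hq2; fold s; field; lra).
    assert (Hle : sqrt (/ s * nsq N (Tapply N y)) <= nrm).
    { rewrite <- Hq2, <- nsq_Tscal. apply (proj1 Hlub).
      exists (fun k => q * y k). split; [apply enorm_eq1; exact Hunit | reflexivity]. }
    assert (Hpos : 0 <= / s * nsq N (Tapply N y))
      by (apply Rmult_le_pos; [left; apply Rinv_0_lt_compat; lra | exact HTy]).
    pose proof (sqrt_sqrt _ Hpos). pose proof (sqrt_pos (/ s * nsq N (Tapply N y))).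
    assert (/ s * nsq N (Tapply N y) <= nrm ^ 2) by nra.
    apply (Rmult_le_reg_l (/ s)); [apply Rinv_0_lt_compat; lra|].
    replace (/ s * (nrm ^ 2 * s)) with (nrm ^ 2) by (field; lra). assumption.
Qed.

(* AM-GM: if ||T y||^2 <= nrm^2 |y|^2 for all y, then
   2 <x, T y> <= nrm (|x|^2 + |y|^2). *)
Lemma dot_T_upper N nrm : 0 <= nrm ->
  (forall y, nsq N (Tapply N y) <= nrm ^ 2 * nsq N y) ->
  forall x y, 2 * dot N x (Tapply N y) <= nrm * (nsq N x + nsq N y).
Proof.
  intros Hn Hbound x y. pose proof (Hbound y) as HTy.
  pose proof (nsq_nonneg N x). pose proof (nsq_nonneg N y).
  pose proof (nsq_nonneg N (Tapply N y)).
  destruct (Req_dec nrm 0) as [->|Hnz].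
  - assert (HT0 : nsq N (Tapply N y) = 0) by nra.
    unfold dot. rewrite rsum_zero; [lra|]. intros k Hk. rewrite (nsq_eq0 N _ HT0 k Hk). ring.
  - assert (Hp : 0 < nrm) by lra.
    assert (Hpt : forall k, 2 * (x k * Tapply N y k) <= nrm * x k ^ 2 + / nrm * Tapply N y k ^ 2).
    { intros k. assert (0 <= / nrm * (nrm * x k - Tapply N y k) ^ 2)
        by (apply Rmult_le_pos; [left; apply Rinv_0_lt_compat; lra | apply pow2_ge_0]).
      replace (nrm * x k ^ 2 + / nrm * Tapply N y k ^ 2)
        with (2 * (x k * Tapply N y k) + / nrm * (nrm * x k - Tapply N y k) ^ 2)
        by (field; lra). lra. }
    assert (Hsum : 2 * dot N x (Tapply N y) <= nrm * nsq N x + / nrm * nsq N (Tapply N y)).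
    { unfold dot, nsq. rewrite <- !rsum_scal, <- rsum_plus. apply rsum_le; intros; apply Hpt. }
    assert (/ nrm * nsq N (Tapply N y) <= nrm * nsq N y).
    { replace (nrm * nsq N y) with (/ nrm * (nrm ^ 2 * nsq N y)) by (field; lra).
      apply Rmult_le_compat_l; [left; apply Rinv_0_lt_compat|]; lra. }
    lra.
Qed.

Theorem mainTheorem15 (N : nat) (hN : (1 <= N)%nat) :
  exists nrm : R, is_lub (opnorm_set N) nrm /\ is_glb (energy_set N) (PI - nrm).
Proof.
  destruct (opnorm_set_inhabited N hN) as (r0 & Hr0 & Hr0pos).
  destruct (completeness (opnorm_set N)) as [nrm Hlub].
  { exists PI. intros r Hr. exact (opnorm_set_le_PI N r Hr). }
  { exists r0. exact Hr0. }
  exists nrm. split; [exact Hlub|].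
  assert (Hn : 0 <= nrm) by (pose proof (proj1 Hlub r0 Hr0); lra).
  split.
  -
    intros e He. apply energy_set_iff in He as (a & b & Hab & ->).
    pose proof (dot_T_upper N nrm Hn (opnorm_sq_bound N nrm Hlub) a b) as Hdot.
    unfold energy_form. rewrite Hab in *. lra.
  -
    intros beta Hbeta.
    assert (nrm <= PI - beta).
    { apply (proj2 Hlub). intros r (v & Hv & ->). apply enorm_eq1 in Hv.
      pose proof (Hbeta _ (energy_attains N v Hv)). lra. }
    lra.
Qed.
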